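(* Let $\mathcal{G}$ be a finite collection of nonempty subsets of $\{1,\dots,d\}$, let $n=\sum_{g\in\mathcal{G}}|g|$, and let $\mathbb{R}^n$ be partitioned into pairwise disjoint index blocks $j(g)$, $|j(g)|=|g|$, $g\in\mathcal{G}$, with $\mathbf{x}_{j(g)}$ identified with a vector supported on the coordinates in $g$. Let $M\in\{0,1\}^{d\times n}$ satisfy $(M\mathbf{x})_i=\sum_{g\in\mathcal{G}:\,i\in g}(\text{entry of }\mathbf{x}_{j(g)}\text{ corresponding to }i)$. Let $\lambda>0$, $w_g>0$, $\mathbf{b}\in\mathbb{R}^d$, $\rho>0$, and $$L_\rho(\mathbf{x}^1,\mathbf{x}^2;\mathbf{y})=\lambda\sum_{g\in\mathcal{G}}w_g\|\mathbf{x}^1_{j(g)}\|_2+\tfrac12\|M\mathbf{x}^2-\mathbf{b}\|_2^2+\langle\mathbf{y},\mathbf{x}^1-\mathbf{x}^2\rangle+\tfrac{\rho}{2}\|\mathbf{x}^1-\mathbf{x}^2\|_2^2 .$$ Assume $L_\rho$ has a finite saddle point. Let $\alpha$ satisfy $0<\alpha<\rho$, and consider the sequences generated from initial points $\mathbf{x}^{1,0},\mathbf{x}^{2,0},\mathbf{y}^0\in\mathbb{R}^n$ by $$\mathbf{x}^{1,k+1}_{j(g)}=\arg\min_{\mathbf{z}\in\mathbb{R}^{|g|}}\lambda w_g\|\mathbf{z}\|_2+\tfrac{\rho}{2}\big\|\mathbf{z}-\mathbf{x}^{2,k}_{j(g)}+\tfrac1\rho\mathbf{y}^k_{j(g)}\big\|_2^2\quad(g\in\mathcal{G}),$$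 $$\mathbf{x}^{2,k+1}=\arg\min_{\mathbf{x}^2\in\mathbb{R}^n}\tfrac12\|M\mathbf{x}^2-\mathbf{b}\|_2^2+\tfrac{\rho}{2}\big\|\mathbf{x}^2-\mathbf{x}^{1,k+1}-\tfrac1\rho\mathbf{y}^k\big\|_2^2,$$ $$\mathbf{y}^{k+1}=\mathbf{y}^k+\alpha(\mathbf{x}^{1,k+1}-\mathbf{x}^{2,k+1}).$$ Then the sequences $\{\mathbf{x}^{1,k}\}$, $\{\mathbf{x}^{2,k}\}$ and $\{\mathbf{y}^k\}$ are uniformly bounded.
   Context: A saddle point of $L_\rho$ is $(\mathbf{x}^{1,*},\mathbf{x}^{2,*};\mathbf{y}^* )$ with $L_\rho(\mathbf{x}^{1,*},\mathbf{x}^{2,*};\mathbf{y})\le L_\rho(\mathbf{x}^{1,*},\mathbf{x}^{2,*};\mathbf{y}^* )\le L_\rho(\mathbf{x}^1,\mathbf{x}^2;\mathbf{y}^* )$ for all $\mathbf{x}^1,\mathbf{x}^2,\mathbf{y}$. The iteration is ADMM with dual stepsize $\alpha$ applied to $\min\lambda\sum_g w_g\|\mathbf{x}^1_{j(g)}\|_2+\frac12\|M\mathbf{x}^2-\mathbf{b}\|_2^2$ s.t. $\mathbf{x}^1=\mathbf{x}^2$ (the proximal operator of the latent overlapping group lasso penalty at $\mathbf{b}$). *)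

From HB Require Import structures.
From mathcomp Require Import all_boot all_order all_algebra.
From mathcomp Require Import reals.
Set Implicit Arguments. Unset Strict Implicit. Unset Printing Implicit Defensive.
Import Order.TTheory GRing.Theory Num.Theory.
Local Open Scope ring_scope.

(* Each coordinate k of R^n belongs to the block
   j(blk k) of the group blk k, and corresponds to the coordinate crd k \in blk k
   of R^d.  The map k |-> (blk k, crd k) is a bijection from 'I_n onto
   {(g,i) | g \in G, i \in g}; this is the partition of R^n into blocks j(g)
   with |j(g)| = |g| and the identification of x_{j(g)} with a vector
   supported on g. *)
Definition block_structure (d n : nat) (G : {set {set 'I_d}})
    (blk : 'I_n -> {set 'I_d}) (crd : 'I_n -> 'I_d) : Prop :=
  [/\ forall k, blk k \in G,
      forall k, crd k \in blk k,
      forall k l, blk k = blk l -> crd k = crd l -> k = l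
    & forall g i, g \in G -> i \in g -> exists k, blk k = g /\ crd k = i].

Section Defs.
Variable R : realType.
Variables (d n : nat).

Definition vnorm (x : 'I_n -> R) : R := Num.sqrt (\sum_(k < n) x k ^+ 2).

Definition blknorm (blk : 'I_n -> {set 'I_d}) (g : {set 'I_d}) (x : 'I_n -> R) : R :=
  Num.sqrt (\sum_(k < n | blk k == g) x k ^+ 2).

(* (M x)_i = sum over the groups g containing i of the entry of x_{j(g)}
   corresponding to i *)
Definition Mop (crd : 'I_n -> 'I_d) (x : 'I_n -> R) : 'I_d -> R :=
  fun i => \sum_(k < n | crd k == i) x k.

Definition lsq (crd : 'I_n -> 'I_d) (b : 'I_d -> R) (x : 'I_n -> R) : R :=
  2^-1 * \sum_(i < d) (Mop crd x i - b i) ^+ 2.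

Definition Lrho (G : {set {set 'I_d}}) (blk : 'I_n -> {set 'I_d})
    (crd : 'I_n -> 'I_d) (lam : R) (w : {set 'I_d} -> R) (b : 'I_d -> R)
    (rho : R) (x1 x2 y : 'I_n -> R) : R :=
  lam * (\sum_(g in G) w g * blknorm blk g x1)
  + lsq crd b x2
  + \sum_(k < n) y k * (x1 k - x2 k)
  + rho / 2 * \sum_(k < n) (x1 k - x2 k) ^+ 2.

Definition has_saddle_point (L : ('I_n -> R) -> ('I_n -> R) -> ('I_n -> R) -> R) : Prop :=
  exists x1s x2s ys : 'I_n -> R,
    forall x1 x2 y : 'I_n -> R,
      L x1s x2s y <= L x1s x2s ys /\ L x1s x2s ys <= L x1 x2 ys.

(* objective of the x^1-subproblem on block g:
   lam w_g ||z||_2 + rho/2 || z - x2_{j(g)} + (1/rho) y_{j(g)} ||^2,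
   z ranging over the block j(g) (entries of z outside j(g) are irrelevant) *)
Definition x1obj (blk : 'I_n -> {set 'I_d}) (lam : R) (w : {set 'I_d} -> R)
    (rho : R) (g : {set 'I_d}) (x2 y z : 'I_n -> R) : R :=
  lam * w g * blknorm blk g z
  + rho / 2 * \sum_(k < n | blk k == g) (z k - x2 k + rho^-1 * y k) ^+ 2.

Definition x2obj (crd : 'I_n -> 'I_d) (b : 'I_d -> R) (rho : R)
    (x1 y z : 'I_n -> R) : R :=
  lsq crd b z + rho / 2 * \sum_(k < n) (z k - x1 k - rho^-1 * y k) ^+ 2.

End Defs.

From HB Require Import structures.
From mathcomp Require Import all_boot all_order all_algebra.
From mathcomp Require Import reals boolp ring lra.
Import Order.TTheory GRing.Theory Num.Theory.
Set Implicit Arguments. Unset Strict Implicit. Unset Printing Implicit Defensive.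
Local Open Scope ring_scope.

(* The saddle point has x1* = x2* =: x*, so its optimality conditions, like
   those of each ADMM subproblem, are subgradient inequalities for the convex
   penalty and for the convex least-squares term.  Monotonicity of these
   subdifferentials together with the dual update makes
     W_k = |y^k - y*|^2 + alpha rho |x2^k - x*|^2
           + alpha (rho - alpha) |x1^k - x2^k|^2
   nonincreasing from k = 1 on.  Since alpha < rho all three weights are
   positive, so W bounds every iterate. *)

Section ConvexFunctions.
Variables (R : realFieldType) (I : finType).
Implicit Types (phi : (I -> R) -> R) (x v p c g : I -> R).

Definition convex_fun phi : Prop :=
  forall x v t, 0 <= t <= 1 ->
    phi (fun k => (1 - t) * x k + t * v k) <= (1 - t) * phi x + t * phi v.

Lemma convex_funZ phi a : 0 <= a -> convex_fun phi -> convex_fun (fun x => a * phi x).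
Proof.
move=> a0 cvx x v t t01 /=.
have -> : (1 - t) * (a * phi x) + t * (a * phi v) = a * ((1 - t) * phi x + t * phi v).
  by ring.
by rewrite ler_wpM2l // cvx.
Qed.

Lemma convex_fun_sum (J : finType) (P : pred J) (F : J -> (I -> R) -> R) :
  (forall j, P j -> convex_fun (F j)) -> convex_fun (fun x => \sum_(j | P j) F j x).
Proof.
move=> cvx x v t t01; rewrite !mulr_sumr -big_split /=.
by apply: ler_sum => j Pj; apply: cvx.
Qed.

Lemma convex_fun_sqr_affine (A : (I -> R) -> R) :
  (forall x v t, A (fun k => (1 - t) * x k + t * v k) = (1 - t) * A x + t * A v) ->
  convex_fun (fun x => A x ^+ 2).
Proof.
move=> affA x v t /andP[t0 t1]; rewrite affA.
have : 0 <= t * (1 - t) * (A v - A x) ^+ 2.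
  by rewrite mulr_ge0 ?sqr_ge0 // mulr_ge0 // subr_ge0.
set s := A x; set s' := A v.
have -> : ((1 - t) * s + t * s') ^+ 2
  = (1 - t) * s ^+ 2 + t * s' ^+ 2 - t * (1 - t) * (s' - s) ^+ 2 by ring.
lra.
Qed.

Definition subgradient phi x g : Prop :=
  forall v, phi x + \sum_k g k * (v k - x k) <= phi v.

Lemma eq_subgradient phi x g g' : g =1 g' -> subgradient phi x g -> subgradient phi x g'.
Proof.
by move=> eqg sub v; under eq_bigr => k _ do rewrite -eqg; apply: sub.
Qed.

Lemma subgradient_monotone phi a b p q :
  subgradient phi a p -> subgradient phi b q ->
  0 <= \sum_k (p k - q k) * (a k - b k).
Proof.
move=> /(_ b) pa /(_ a) qb.
have -> : \sum_k (p k - q k) * (a k - b k)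
        = - (\sum_k p k * (b k - a k) + \sum_k q k * (a k - b k)).
  rewrite -big_split -sumrN /=; apply: eq_bigr => k _; ring.
lra.
Qed.

Lemma ge0_of_ge_Nmul (a e : R) :
  0 <= e -> (forall t, 0 < t <= 1 -> - (t * e) <= a) -> 0 <= a.
Proof.
move=> e0 lb; rewrite leNgt; apply/negP => a0.
pose t := - a / (e - a).
have t0 : 0 < t by apply: divr_gt0; lra.
have t1 : t <= 1 by rewrite ler_pdivrMr; lra.
have te : t * e - t * a = - a by rewrite -mulrBr /t; field; lra.
have := lb t; rewrite t0 t1 => /(_ isT).
have : t * a < 0 by rewrite pmulr_rlt0.
lra.
Qed.

Definition quadratic p c (q : R) v := \sum_k (p k * v k + q * (v k - c k) ^+ 2).

Lemma quadratic_segment p c q x v t :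
  quadratic p c q (fun k => (1 - t) * x k + t * v k)
  = quadratic p c q x + t * \sum_k (p k + 2 * q * (x k - c k)) * (v k - x k)
    + t ^+ 2 * \sum_k q * (v k - x k) ^+ 2.
Proof.
by rewrite /quadratic !mulr_sumr -!big_split /=; apply: eq_bigr => k _; ring.
Qed.

(* Compare the minimiser with the points (1 - t) x + t v and let t -> 0. *)
Lemma convex_min_subgradient phi p c q x :
  convex_fun phi -> 0 <= q ->
  (forall v, phi x + quadratic p c q x <= phi v + quadratic p c q v) ->
  subgradient phi x (fun k => - (p k + 2 * q * (x k - c k))).
Proof.
move=> cvx q0 xmin v.
set s := \sum_k (p k + 2 * q * (x k - c k)) * (v k - x k).
set e := \sum_k q * (v k - x k) ^+ 2.
have -> : \sum_k - (p k + 2 * q * (x k - c k)) * (v k - x k) = - s.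
  by rewrite -sumrN; apply: eq_bigr => k _; rewrite mulNr.
suff : 0 <= phi v - phi x + s by lra.
apply: (@ge0_of_ge_Nmul _ e); first by apply: sumr_ge0 => k _; rewrite mulr_ge0 ?sqr_ge0.
move=> t /andP[t0 t1].
have := xmin (fun k => (1 - t) * x k + t * v k).
rewrite quadratic_segment -/s -/e.
have := cvx x v t; rewrite ltW ?t1 // => /(_ isT) cvxt hmin.
have : 0 <= t * (phi v - phi x + s + t * e).
  by rewrite expr2 in hmin; lra.
by rewrite pmulr_rge0 //; lra.
Qed.

End ConvexFunctions.

Section EuclideanNorm.
Variables (R : rcfType) (I : finType) (P : pred I).
Implicit Types (a b : I -> R).

Lemma sum_sqr_ge0 a : 0 <= \sum_(k | P k) a k ^+ 2.
Proof. by apply: sumr_ge0 => k _; apply: sqr_ge0. Qed.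

Lemma sum_mul_eq0 a b : \sum_(k | P k) a k ^+ 2 = 0 -> \sum_(k | P k) a k * b k = 0.
Proof.
move=> /(psumr_eq0P (fun k _ => sqr_ge0 (a k))) a0.
by rewrite big1 // => k /a0 /eqP; rewrite sqrf_eq0 => /eqP ->; rewrite mul0r.
Qed.

(* Cauchy-Schwarz, from [0 <= sum (|b| a - |a| b)^2 = 2 |a| |b| (|a| |b| - <a, b>)]. *)
Lemma sum_mul_le_sqrt a b :
  \sum_(k | P k) a k * b k
  <= Num.sqrt (\sum_(k | P k) a k ^+ 2) * Num.sqrt (\sum_(k | P k) b k ^+ 2).
Proof.
have := sqr_sqrtr (sum_sqr_ge0 a); have := sqr_sqrtr (sum_sqr_ge0 b).
have := sqrtr_ge0 (\sum_(k | P k) a k ^+ 2); have := sqrtr_ge0 (\sum_(k | P k) b k ^+ 2).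
move: (Num.sqrt (\sum_(k | P k) b k ^+ 2)) (Num.sqrt (\sum_(k | P k) a k ^+ 2)).
move=> sB sA sB0 sA0 hB hA; set S := \sum_(k | P k) a k * b k.
have gap_ge0 : 0 <= sA * sB * (sA * sB - S).
  have : 0 <= \sum_(k | P k) (sB * a k - sA * b k) ^+ 2 by apply: sum_sqr_ge0.
  have -> : \sum_(k | P k) (sB * a k - sA * b k) ^+ 2 = 2 * (sA * sB * (sA * sB - S)).
    transitivity (sB ^+ 2 * sA ^+ 2 - 2 * (sA * sB) * S + sA ^+ 2 * sB ^+ 2).
      rewrite {1}hA {2}hB /S !mulr_sumr -sumrB -big_split /=.
      by apply: eq_bigr => k _; ring.
    by ring.
  by rewrite pmulr_rge0.
have [AB0|AB0] := ltrP 0 (sA * sB); first by move: gap_ge0; rewrite pmulr_rge0 // subr_ge0.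
have /eqP : sA * sB = 0 by apply/eqP; rewrite eq_le AB0 mulr_ge0.
rewrite mulf_eq0 => /orP[] /eqP s0; rewrite s0 ?mul0r ?mulr0.
  by rewrite /S sum_mul_eq0 // -hA s0 expr0n.
by rewrite /S (eq_bigr _ (fun k _ => mulrC (a k) (b k))) sum_mul_eq0 // -hB s0 expr0n.
Qed.

Lemma sqrt_sum_sqrD_le a b :
  Num.sqrt (\sum_(k | P k) (a k + b k) ^+ 2)
  <= Num.sqrt (\sum_(k | P k) a k ^+ 2) + Num.sqrt (\sum_(k | P k) b k ^+ 2).
Proof.
have := sum_mul_le_sqrt a b.
set A := \sum_(k | P k) a k ^+ 2; set B := \sum_(k | P k) b k ^+ 2.
have -> : \sum_(k | P k) (a k + b k) ^+ 2 = A + 2 * \sum_(k | P k) a k * b k + B.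
  by rewrite /A /B mulr_sumr -!big_split /=; apply: eq_bigr => k _; ring.
move=> cs; rewrite -[leRHS]ger0_norm ?addr_ge0 ?sqrtr_ge0 //.
rewrite -sqrtr_sqr ler_sqrt ?sqr_ge0 //.
by rewrite sqrrD !sqr_sqrtr ?sum_sqr_ge0 //; lra.
Qed.

Lemma sqrt_sum_sqrZ (t : R) a :
  Num.sqrt (\sum_(k | P k) (t * a k) ^+ 2) = `|t| * Num.sqrt (\sum_(k | P k) a k ^+ 2).
Proof.
rewrite -sqrtr_sqr -sqrtrM ?sqr_ge0 // mulr_sumr.
by congr Num.sqrt; apply: eq_bigr => k _; rewrite exprMn.
Qed.

Lemma convex_fun_sqrt_sum_sqr :
  convex_fun (fun x : I -> R => Num.sqrt (\sum_(k | P k) x k ^+ 2)).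
Proof.
move=> x v t /andP[t0 t1].
apply: le_trans (sqrt_sum_sqrD_le _ _) _.
by rewrite !sqrt_sum_sqrZ !ger0_norm // subr_ge0.
Qed.
End EuclideanNorm.

Lemma sum_sqr_le_shift (R : realFieldType) (I : finType) (a b : I -> R) :
  \sum_k a k ^+ 2 <= 2 * (\sum_k (a k - b k) ^+ 2 + \sum_k b k ^+ 2).
Proof.
rewrite -big_split mulr_sumr /=; apply: ler_sum => k _.
have : 0 <= (a k - 2 * b k) ^+ 2 by apply: sqr_ge0.
by rewrite -subr_ge0; congr (_ <= _); ring.
Qed.

Section AdmmDescent.
Variables (R : realFieldType) (I : finType) (f h : (I -> R) -> R) (rho alpha : R).
Variables (u z y : nat -> I -> R) (xs ys : I -> R).
Hypotheses (alpha_gt0 : 0 < alpha) (alpha_lt_rho : alpha < rho).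
Hypothesis f_star : subgradient f xs (fun i => - ys i).
Hypothesis h_star : subgradient h xs ys.
Hypothesis f_step :
  forall k, subgradient f (u k.+1) (fun i => - (y k i + rho * (u k.+1 i - z k i))).
Hypothesis h_step :
  forall k, subgradient h (z k.+1) (fun i => y k i - rho * (z k.+1 i - u k.+1 i)).
Hypothesis y_step : forall k i, y k.+1 i = y k i + alpha * (u k.+1 i - z k.+1 i).

Let rho_gt0 : 0 < rho := lt_trans alpha_gt0 alpha_lt_rho.
Let rho_alpha_gt0 : 0 < rho - alpha. Proof. by rewrite subr_gt0. Qed.
Let ar_gt0 : 0 < alpha * rho. Proof. exact: mulr_gt0. Qed.
Let ara_gt0 : 0 < alpha * (rho - alpha). Proof. exact: mulr_gt0. Qed.

Definition admm_energy j :=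
  \sum_i ((y j i - ys i) ^+ 2 + alpha * rho * (z j i - xs i) ^+ 2
          + alpha * (rho - alpha) * (u j i - z j i) ^+ 2).

Lemma admm_energy_decreasing k : admm_energy k.+2 <= admm_energy k.+1.
Proof.
have mono_f := subgradient_monotone (f_step k.+1) f_star.
have mono_h := subgradient_monotone (h_step k.+1) h_star.
have mono_h_steps := subgradient_monotone (h_step k.+1) (h_step k).
have := addr_ge0 (addr_ge0 mono_f mono_h) mono_h_steps; rewrite -!big_split /=.
set M := \sum_i _ => M0.
have aM0 : 0 <= 2 * alpha * M by rewrite !mulr_ge0 // ltW.
suff : 0 <= admm_energy k.+1 - admm_energy k.+2 - 2 * alpha * M by lra.
have -> : admm_energy k.+1 - admm_energy k.+2 - 2 * alpha * M =
   \sum_i alpha * (rho * (u k.+2 i - z k.+2 i) ^+ 2 + alpha * (z k.+2 i - z k.+1 i) ^+ 2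
     + (rho - alpha) * ((u k.+1 i - z k.+1 i) + (z k.+2 i - z k.+1 i)) ^+ 2).
  rewrite /admm_energy /M mulr_sumr -!sumrB; apply: eq_bigr => i _.
  by rewrite !y_step; ring.
apply: sumr_ge0 => i _; apply: mulr_ge0; first exact: ltW.
by rewrite !addr_ge0 // mulr_ge0 ?sqr_ge0 ?ltW.
Qed.

Lemma admm_energy_ge0 j : 0 <= admm_energy j.
Proof.
apply: sumr_ge0 => i _.
by rewrite !addr_ge0 ?sqr_ge0 ?(mulr_ge0 _ (sqr_ge0 _)) ?ltW.
Qed.

Lemma admm_energy_le k : admm_energy k <= admm_energy 0 + admm_energy 1.
Proof.
have [e0 e1] := (admm_energy_ge0 0, admm_energy_ge0 1).
case: k => [|k]; first lra.
suff : admm_energy k.+1 <= admm_energy 1 by lra.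
by elim: k => [|k IH] //; apply: le_trans (admm_energy_decreasing k) IH.
Qed.

Lemma admm_iterates_bounded : exists C, forall k,
  [/\ \sum_i u k i ^+ 2 <= C, \sum_i z k i ^+ 2 <= C & \sum_i y k i ^+ 2 <= C].
Proof.
set E := admm_energy 0 + admm_energy 1.
have E0 : 0 <= E by rewrite addr_ge0 ?admm_energy_ge0.
set Sx := \sum_i xs i ^+ 2; set Sy := \sum_i ys i ^+ 2.
have [Sx0 Sy0] : 0 <= Sx /\ 0 <= Sy by rewrite !sumr_ge0 // => i _; rewrite sqr_ge0.
have [Er0 Era0] : 0 <= (alpha * rho)^-1 * E /\ 0 <= (alpha * (rho - alpha))^-1 * E.
  by split; rewrite mulr_ge0 // invr_ge0 ltW.
exists (4 * (E + (alpha * rho)^-1 * E + (alpha * (rho - alpha))^-1 * E + Sx + Sy)) => k.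
have := admm_energy_le k; rewrite -/E /admm_energy !big_split /= -!mulr_sumr.
set Y := \sum_i (y k i - ys i) ^+ 2; set Z := \sum_i (z k i - xs i) ^+ 2.
set D := \sum_i (u k i - z k i) ^+ 2 => Ek.
have [Y0 Z0 D0] : [/\ 0 <= Y, 0 <= Z & 0 <= D].
  by split; rewrite sumr_ge0 // => i _; rewrite sqr_ge0.
have [rZ0 rD0] : 0 <= alpha * rho * Z /\ 0 <= alpha * (rho - alpha) * D.
  by split; rewrite mulr_ge0 // ltW.
have YE : Y <= E by lra.
have ZE : Z <= (alpha * rho)^-1 * E by rewrite ler_pdivlMl //; lra.
have DE : D <= (alpha * (rho - alpha))^-1 * E by rewrite ler_pdivlMl //; lra.
have := sum_sqr_le_shift (z k) xs; have := sum_sqr_le_shift (u k) (z k).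
have := sum_sqr_le_shift (y k) ys; rewrite -/Y -/Z -/D -/Sx -/Sy => yk uk zk.
split; lra.
Qed.

End AdmmDescent.

Section GroupLassoAdmm.
Variables (R : realType) (d n : nat) (G : {set {set 'I_d}}).
Variables (blk : 'I_n -> {set 'I_d}) (crd : 'I_n -> 'I_d).
Variables (lam : R) (w : {set 'I_d} -> R) (b : 'I_d -> R) (rho : R).
Hypotheses (blkG : forall k, blk k \in G) (lam_ge0 : 0 <= lam).
Hypotheses (w_ge0 : forall g, g \in G -> 0 <= w g) (rho_gt0 : 0 < rho).

Local Notation L := (Lrho G blk crd lam w b rho).

Definition group_penalty (x : 'I_n -> R) := lam * \sum_(g in G) w g * blknorm blk g x.

Lemma convex_group_penalty : convex_fun group_penalty.
Proof.
apply: convex_funZ lam_ge0 _; apply: convex_fun_sum => g gG.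
exact: convex_funZ (w_ge0 gG) (convex_fun_sqrt_sum_sqr _).
Qed.

Lemma convex_lsq : convex_fun (lsq crd b).
Proof.
apply: convex_funZ; first by rewrite invr_ge0 ler0n.
apply: convex_fun_sum => i _; apply: convex_fun_sqr_affine => x v t.
by rewrite /Mop big_split /= -!mulr_sumr; ring.
Qed.

Lemma saddle_point_feasible x1s x2s ys :
  (forall y, L x1s x2s y <= L x1s x2s ys) -> x1s = x2s.
Proof.
move=> /(_ (fun k => ys k + (x1s k - x2s k))); rewrite /Lrho lerD2r lerD2l.
rewrite -subr_le0 -sumrB.
have -> : \sum_k ((ys k + (x1s k - x2s k)) * (x1s k - x2s k) - ys k * (x1s k - x2s k))
        = \sum_k (x1s k - x2s k) ^+ 2 by apply: eq_bigr => k _; ring.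
move=> le0; apply: funext => k; apply/eqP; rewrite -subr_eq0 -sqrf_eq0.
have /psumr_eq0P -> // : \sum_k (x1s k - x2s k) ^+ 2 = 0.
  by apply/eqP; rewrite eq_le le0 sumr_ge0 // => i _; rewrite sqr_ge0.
by move=> i _; rewrite sqr_ge0.
Qed.

Lemma Lrho_quadratic_x1 x1 x2 y :
  L x1 x2 y = group_penalty x1 + quadratic y x2 (rho / 2) x1
                 + (lsq crd b x2 - \sum_k y k * x2 k).
Proof.
rewrite /Lrho /group_penalty.
have -> : \sum_k y k * (x1 k - x2 k) = \sum_k y k * x1 k - \sum_k y k * x2 k.
  by rewrite -sumrB; apply: eq_bigr => k _; ring.
by rewrite /quadratic big_split /= -mulr_sumr; ring.
Qed.

Lemma Lrho_quadratic_x2 x1 x2 y :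
  L x1 x2 y = lsq crd b x2 + quadratic (fun k => - y k) x1 (rho / 2) x2
                 + (group_penalty x1 + \sum_k y k * x1 k).
Proof.
rewrite /Lrho /group_penalty.
have -> : \sum_k y k * (x1 k - x2 k) = \sum_k y k * x1 k + \sum_k - y k * x2 k.
  by rewrite -big_split /=; apply: eq_bigr => k _; ring.
have -> : \sum_k (x1 k - x2 k) ^+ 2 = \sum_k (x2 k - x1 k) ^+ 2.
  by apply: eq_bigr => k _; ring.
by rewrite /quadratic big_split /= -mulr_sumr; ring.
Qed.

Lemma sum_x1obj_quadratic x2 y z :
  \sum_(g in G) x1obj blk lam w rho g x2 y z
  = group_penalty z + quadratic (fun _ => 0) (fun k => x2 k - rho^-1 * y k) (rho / 2) z.
Proof.
rewrite big_split /= /group_penalty mulr_sumr; congr (_ + _).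
  by apply: eq_bigr => g _; rewrite mulrA.
rewrite /quadratic (partition_big blk (mem G)) //=.
by apply: eq_bigr => g _; rewrite mulr_sumr; apply: eq_bigr => k _; ring.
Qed.

Lemma x2obj_quadratic x1 y z :
  x2obj crd b rho x1 y z
  = lsq crd b z + quadratic (fun _ => 0) (fun k => x1 k + rho^-1 * y k) (rho / 2) z.
Proof.
rewrite /x2obj /quadratic mulr_sumr; congr (_ + _); apply: eq_bigr => k _; ring.
Qed.

Lemma saddle_point_subgradients xs ys :
  (forall x1 x2, L xs xs ys <= L x1 x2 ys) ->
  subgradient group_penalty xs (fun k => - ys k) /\ subgradient (lsq crd b) xs ys.
Proof.
have q0 : 0 <= rho / 2 by rewrite divr_ge0 ?ltW.
move=> saddle; split.
  apply: eq_subgradient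
    (convex_min_subgradient (p := ys) (c := xs) convex_group_penalty q0 _).
    by move=> k; ring.
  by move=> v; have := saddle v xs; rewrite !Lrho_quadratic_x1 lerD2r.
apply: eq_subgradient
  (convex_min_subgradient (p := fun k => - ys k) (c := xs) convex_lsq q0 _).
  by move=> k; ring.
by move=> v; have := saddle xs v; rewrite !Lrho_quadratic_x2 lerD2r.
Qed.

Lemma x1_step_subgradient x2 y x1' :
  (forall g, g \in G -> forall z,
     x1obj blk lam w rho g x2 y x1' <= x1obj blk lam w rho g x2 y z) ->
  subgradient group_penalty x1' (fun k => - (y k + rho * (x1' k - x2 k))).
Proof.
move=> x1min; have q0 : 0 <= rho / 2 by rewrite divr_ge0 ?ltW.
apply: eq_subgradient (convex_min_subgradient (p := fun _ => 0)
  (c := fun k => x2 k - rho^-1 * y k) convex_group_penalty q0 _) => [k|v].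
  by field; rewrite gt_eqF.
by rewrite -!sum_x1obj_quadratic; apply: ler_sum => g gG; apply: x1min.
Qed.

Lemma x2_step_subgradient x1 y x2' :
  (forall z, x2obj crd b rho x1 y x2' <= x2obj crd b rho x1 y z) ->
  subgradient (lsq crd b) x2' (fun k => y k - rho * (x2' k - x1 k)).
Proof.
move=> x2min; have q0 : 0 <= rho / 2 by rewrite divr_ge0 ?ltW.
apply: eq_subgradient (convex_min_subgradient (p := fun _ => 0)
  (c := fun k => x1 k + rho^-1 * y k) convex_lsq q0 _) => [k|v].
  by field; rewrite gt_eqF.
by rewrite -!x2obj_quadratic.
Qed.

End GroupLassoAdmm.

Theorem lemma3p2 (R : realType) (d n : nat) (G : {set {set 'I_d}})
    (blk : 'I_n -> {set 'I_d}) (crd : 'I_n -> 'I_d)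
    (lam : R) (w : {set 'I_d} -> R) (b : 'I_d -> R) (rho alpha : R)
    (x1 x2 y : nat -> 'I_n -> R) :
  set0 \notin G ->
  block_structure G blk crd ->
  0 < lam ->
  (forall g, g \in G -> 0 < w g) ->
  0 < rho ->
  has_saddle_point (Lrho G blk crd lam w b rho) ->
  0 < alpha -> alpha < rho ->
  (forall k g, g \in G -> forall z : 'I_n -> R,
      x1obj blk lam w rho g (x2 k) (y k) (x1 k.+1)
        <= x1obj blk lam w rho g (x2 k) (y k) z) ->
  (forall k (z : 'I_n -> R),
      x2obj crd b rho (x1 k.+1) (y k) (x2 k.+1)
        <= x2obj crd b rho (x1 k.+1) (y k) z) ->
  (forall k i, y k.+1 i = y k i + alpha * (x1 k.+1 i - x2 k.+1 i)) ->
  exists C : R, forall k,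
    [/\ vnorm (x1 k) <= C, vnorm (x2 k) <= C & vnorm (y k) <= C].
Proof.
move=> _ [blkG _ _ _] lam_gt0 w_gt0 rho_gt0 [x1s [x2s [ys saddle]]].
move=> alpha_gt0 alpha_lt_rho x1_min x2_min y_step.
have w_ge0 g (gG : g \in G) : 0 <= w g by rewrite ltW ?w_gt0.
have feasible := saddle_point_feasible (fun y => (saddle x1s x2s y).1).
subst x2s; have [f_star h_star] := saddle_point_subgradients (ltW lam_gt0) w_ge0 rho_gt0
  (fun x1 x2 => (saddle x1 x2 ys).2).
have [C bounded] := admm_iterates_bounded alpha_gt0 alpha_lt_rho f_star h_star
  (fun k => x1_step_subgradient blkG (ltW lam_gt0) w_ge0 rho_gt0 (x1_min k))
  (fun k => x2_step_subgradient rho_gt0 (x2_min k)) y_step.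
have [x1_le0 _ _] := bounded 0%N.
have C0 : 0 <= C := le_trans (sumr_ge0 _ (fun i _ => sqr_ge0 _)) x1_le0.
by exists (Num.sqrt C) => k; have [? ? ?] := bounded k; split; rewrite /vnorm ler_sqrt.
Qed.
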